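(* Let $M\subset\mathbb{R}^{2d}$ satisfy the standing assumptions below, let $V$ be the vector field defined below and $\varphi_t$ its flow. There exist constants $\tilde C,\tilde\delta>0$ such that for all $x$ with $|x|\ge 1/\tilde\delta$, $$|\varphi_1(x)-x-V(x)|\le\frac{\tilde C}{|x|}.$$
   Context: $\mathbb{R}^{2d}$ carries its standard inner product, norm $|\cdot|$, complex structure $J$ ($J^2=-I$, orthogonal) and symplectic form $\omega(u,v)=\langle Ju,v\rangle$. Standing assumptions: $M$ is a smooth closed hypersurface bounding a strictly convex domain containing the origin in its interior, and is a level set of a smooth function with positive definite Hessian. Let $G:M\to S^{2d-1}$ be the outward unit normal Gauss map (a diffeomorphism). For $x\neq0$ set $n_\pm(x)=G^{-1}(\mp Jx/|x|)$ and $V(x)=2(n_+(x)-n_-(x))$, a smooth vector field on $\mathbb{R}^{2d}\setminus\{0\}$, homogeneous of degree zero ($V(cx)=V(x)$ for $c>0$). It equals $-2X_H$, where $X_H=J\nabla H$ and $H$ is the positively $1$-homogeneous function whose unit level set is the symplectic polar of the symmetrization of $M$; in particular its flow $\varphi_t$ is defined for all $t$. *)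

From HB Require Import structures.
From mathcomp Require Import all_boot all_order all_algebra.
From mathcomp Require Import all_classical all_reals all_analysis.
Set Implicit Arguments. Unset Strict Implicit. Unset Printing Implicit Defensive.
Import Order.TTheory GRing.Theory Num.Theory.
Import numFieldNormedType.Exports.
Local Open Scope classical_set_scope.
Local Open Scope ring_scope.

Section Defs.
Variables (R : realType) (d : nat).

(* R^{2d} as row vectors; coordinates (x_1..x_d, y_1..y_d). *)
Notation V := 'rV[R]_(d + d).

Definition edot (u v : V) : R := \sum_i u 0 i * v 0 i.
Definition enorm (v : V) : R := Num.sqrt (edot v v).

(* standard complex structure: J(x, y) = (-y, x), i.e. multiplication by i on C^d *)
Definition Jstd (v : V) : V := row_mx (- rsubmx v) (lsubmx v).

Definition ebasis (i : 'I_(d + d)) : V := delta_mx 0 i.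

(* C^infty: every iterated directional derivative exists and is
   (Frechet) differentiable everywhere *)
Fixpoint iter_dir (f : V -> R) (vs : seq V) : V -> R :=
  match vs with
  | [::] => f
  | v :: vs' => fun x => 'D_v (iter_dir f vs') x
  end.
Definition smooth (f : V -> R) : Prop :=
  forall (vs : seq V) (x : V), differentiable (iter_dir f vs) x.

Definition grad (f : V -> R) (x : V) : V := \row_i 'D_(ebasis i) f x.
Definition hessian (f : V -> R) (x : V) : 'M[R]_(d + d) :=
  \matrix_(i, j) 'D_(ebasis i) ('D_(ebasis j) f) x.
Definition posdef (A : 'M[R]_(d + d)) : Prop :=
  forall v : V, v != 0 -> 0 < (v *m A *m v^T) 0 0.

Definition levelset (F : V -> R) (c : R) : set V := [set x | F x = c].

Definition gauss (F : V -> R) (x : V) : V := (enorm (grad F x))^-1 *: grad F x.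

Definition gauss_inv (F : V -> R) (c : R) (u : V) : V :=
  xget 0 [set p | F p = c /\ gauss F p = u].

Definition nplus F c (x : V) : V := gauss_inv F c (- ((enorm x)^-1 *: Jstd x)).
Definition nminus F c (x : V) : V := gauss_inv F c ((enorm x)^-1 *: Jstd x).
Definition Vfield F c (x : V) : V := 2%:R *: (nplus F c x - nminus F c x).

Definition is_flow (Vf : V -> V) (phi : R -> V -> V) : Prop :=
  forall x : V, x != 0 ->
    phi 0 x = x /\
    forall t : R, phi t x != 0 /\ is_derive t 1 (fun s => phi s x) (Vf (phi t x)).

End Defs.

(* Strict convexity, made uniform by compactness of M, gives a constant m > 0 with
   <grad F p, q - p> <= - m |q - p|^2 / 4 for p, q in M; with |grad F| <= L on M this
   makes the Gauss map expanding, kappa |p - q| <= |G p - G q|.  G is onto the sphere: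
   at a maximiser p of <u, .> on M every descent direction w of F satisfies
   <u, w> <= 0 (otherwise one moves inside M and returns to M along J u, which is
   orthogonal to u), which forces grad F p to be a positive multiple of u.  Hence
   |V| <= 4 rho, where M lies in the rho-ball, and, as x |-> J x / |x| is
   (2 / |x|)-Lipschitz at x, |V y - V x| <= 8 |x - y| / (kappa |x|).  Up to time 1 the
   orbit of x stays in the (4 rho)-ball around x, and the mean value inequality for
   t |-> phi_t x - t V x gives the bound with C = 32 rho / kappa. *)

From HB Require Import structures.
From mathcomp Require Import all_boot all_order all_algebra.
From mathcomp Require Import all_classical all_reals all_analysis.
From mathcomp Require Import ring lra.
Import Order.TTheory GRing.Theory Num.Theory.
Import numFieldNormedType.Exports.
Local Open Scope classical_set_scope.
Local Open Scope ring_scope.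
Set Implicit Arguments. Unset Strict Implicit. Unset Printing Implicit Defensive.

Section Euclidean.
Variables (R : realType) (d : nat).
Notation vec := 'rV[R]_(d + d).
Implicit Types u v w : vec.

Lemma edotC u v : edot u v = edot v u.
Proof. by apply: eq_bigr => i _; rewrite mulrC. Qed.

Lemma edotDr u v w : edot u (v + w) = edot u v + edot u w.
Proof. by rewrite /edot -big_split; apply: eq_bigr => i _; rewrite mxE mulrDr. Qed.

Lemma edotZr u v a : edot u (a *: v) = a * edot u v.
Proof. by rewrite /edot mulr_sumr; apply: eq_bigr => i _; rewrite mxE mulrCA. Qed.

Lemma edotNr u v : edot u (- v) = - edot u v.
Proof. by rewrite -scaleN1r edotZr mulN1r. Qed.

Lemma edotBr u v w : edot u (v - w) = edot u v - edot u w.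
Proof. by rewrite edotDr edotNr. Qed.

Lemma edotDl u v w : edot (v + w) u = edot v u + edot w u.
Proof. by rewrite edotC edotDr !(edotC u). Qed.

Lemma edotZl u v a : edot (a *: v) u = a * edot v u.
Proof. by rewrite edotC edotZr edotC. Qed.

Lemma edotNl u v : edot (- v) u = - edot v u.
Proof. by rewrite edotC edotNr edotC. Qed.

Lemma edotBl u v w : edot (v - w) u = edot v u - edot w u.
Proof. by rewrite edotDl edotNl. Qed.

Lemma edot0r u : edot u 0 = 0.
Proof. by rewrite /edot big1 // => i _; rewrite mxE mulr0. Qed.

Lemma edot0l u : edot 0 u = 0.
Proof. by rewrite edotC edot0r. Qed.

Lemma edot_ge0 v : 0 <= edot v v.
Proof. by apply: sumr_ge0 => i _; rewrite -expr2 sqr_ge0. Qed.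

Lemma edot_eq0 v : edot v v = 0 -> v = 0.
Proof.
move=> v0; apply/rowP => i; rewrite mxE; apply/eqP; rewrite -sqrf_eq0.
have /psumr_eq0P vi0 : \sum_(j < d + d) v 0 j ^+ 2 = 0.
  by rewrite -[RHS]v0; apply: eq_bigr => j _; rewrite expr2.
by rewrite vi0 // => j _; exact: sqr_ge0.
Qed.

Lemma enorm_ge0 v : 0 <= enorm v.
Proof. exact: sqrtr_ge0. Qed.

Lemma enorm_sqr v : enorm v ^+ 2 = edot v v.
Proof. by rewrite sqr_sqrtr // edot_ge0. Qed.

Lemma enorm0 : enorm (0 : vec) = 0.
Proof. by rewrite /enorm edot0r sqrtr0. Qed.

Lemma enorm_eq0 v : (enorm v == 0) = (v == 0).
Proof.
apply/eqP/eqP => [v0|->]; last exact: enorm0.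
by apply: edot_eq0; rewrite -enorm_sqr v0 expr0n.
Qed.

Lemma enorm_gt0 v : v != 0 -> 0 < enorm v.
Proof. by move=> v0; rewrite lt_def enorm_ge0 enorm_eq0 v0. Qed.

Lemma enormZ a v : enorm (a *: v) = `|a| * enorm v.
Proof.
by rewrite /enorm edotZr edotZl mulrA -expr2 sqrtrM ?sqr_ge0 // sqrtr_sqr.
Qed.

Lemma enormN v : enorm (- v) = enorm v.
Proof. by rewrite -scaleN1r enormZ normrN1 mul1r. Qed.

Lemma enorm_distC u v : enorm (u - v) = enorm (v - u).
Proof. by rewrite -enormN opprB. Qed.

Lemma edot_le_enormM u v : edot u v <= enorm u * enorm v.
Proof.
have [->|u0] := eqVneq u 0; first by rewrite edot0l enorm0 mul0r.
have [->|v0] := eqVneq v 0; first by rewrite edot0r enorm0 mulr0.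
set a := enorm u; set b := enorm v.
have a0 : 0 < a by exact: enorm_gt0.
have b0 : 0 < b by exact: enorm_gt0.
have := edot_ge0 (b *: u - a *: v).
rewrite edotBl !edotBr !edotZl !edotZr -!enorm_sqr -/a -/b (edotC v u) => h.
have : 0 <= 2 * (a * b) * (a * b - edot u v) by lra.
by rewrite pmulr_rge0 ?subr_ge0 // !mulr_gt0.
Qed.

Lemma ler_enormD u v : enorm (u + v) <= enorm u + enorm v.
Proof.
rewrite -ler_sqr ?nnegrE ?addr_ge0 ?enorm_ge0 //.
rewrite enorm_sqr edotDl !edotDr sqrrD !enorm_sqr (edotC v u).
have := edot_le_enormM u v; lra.
Qed.

Lemma lerB_enorm_dist u v : enorm u - enorm v <= enorm (u - v).
Proof. have := ler_enormD (u - v) v; rewrite subrK; lra. Qed.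

Lemma normr_coord_le_enorm v i : `|v 0 i| <= enorm v.
Proof.
rewrite -sqrtr_sqr ler_sqrt ?edot_ge0 // /edot (bigD1 i) //= -expr2 lerDl.
by apply: sumr_ge0 => j _; rewrite -expr2 sqr_ge0.
Qed.

Lemma edot_continuous w : continuous (edot w).
Proof.
have -> : edot w = \sum_(i < d + d) (fun v : vec => w 0 i * v 0 i).
  by apply/funext => v; rewrite /edot fct_sumE.
move=> x; apply/differentiable_continuous/differentiable_sum => i.
exact/differentiableM/differentiable_coord/differentiable_cst.
Qed.

Lemma enorm_continuous : continuous (@enorm R d).
Proof.
move=> x; apply: (continuous_comp (f := fun v : vec => edot v v)); last exact: sqrt_continuous.
apply: differentiable_continuous.
have -> : (fun v : vec => edot v v) = \sum_(i < d + d) (fun v : vec => v 0 i * v 0 i).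
  by apply/funext => v; rewrite /edot fct_sumE.
by apply: differentiable_sum => i; apply: differentiableM; exact: differentiable_coord.
Qed.

Lemma enorm_le_compact r : compact [set v : vec | enorm v <= r].
Proof.
apply: bounded_closed_compact.
  exists r; split; first by rewrite num_real.
  move=> M rM v /= vr; rewrite /Num.norm /= mx_normrE.
  apply: bigmax_le => [|[i j] _ /=]; first by have := enorm_ge0 v; lra.
  by rewrite (ord1 i); have := normr_coord_le_enorm v j; lra.
exact: (proj1 (continuous_closedP _) enorm_continuous _ (@closed_le _ r)).
Qed.

Lemma colinear_of_halfspace_le g u : g != 0 ->
  (forall w, edot g w < 0 -> edot u w <= 0) -> exists2 a, 0 <= a & u = a *: g.
Proof.
move=> g0 halfspace.
have gg0 : 0 < edot g g by rewrite -enorm_sqr exprn_gt0 // enorm_gt0.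
set ug := edot u g; set a := ug / edot g g.
have ug0 : 0 <= ug.
  have := halfspace (- g); rewrite !edotNr -/ug oppr_lt0 => /(_ gg0); lra.
exists a; first exact: divr_ge0 (ltW gg0).
set u' := u - a *: g.
have u'g : edot u' g = 0 by rewrite edotBl edotZl -/ug /a mulfVK ?gt_eqF // subrr.
suff /edot_eq0 u'0 : edot u' u' = 0 by apply/eqP; rewrite -subr_eq0 -/u' u'0.
apply/eqP; rewrite eq_le edot_ge0 andbT leNgt; apply/negP => b0.
(* [w = u' - e g] lies in the open half-space but [edot u w > 0] for small [e > 0] *)
set b := edot u' u' in b0; set e := b / (ug + b).
have e0 : 0 < e by rewrite divr_gt0 // ltr_wpDl.
have eE : e * (ug + b) = b by rewrite mulfVK // gt_eqF // ltr_wpDl.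
have := halfspace (u' - e *: g).
rewrite edotBr edotZr (edotC g u') u'g sub0r oppr_lt0 => /(_ (mulr_gt0 e0 gg0)).
rewrite edotBr edotZr -/ug (_ : edot u u' = b); last first.
  by rewrite -[in LHS](subrK (a *: g) u) -/u' edotDl edotZl (edotC g u') u'g mulr0 addr0.
have : 0 < e * b by exact: mulr_gt0.
lra.
Qed.

Lemma JstdD u v : Jstd (u + v) = Jstd u + Jstd v.
Proof. by rewrite /Jstd add_row_mx raddfD /= opprD raddfD. Qed.

Lemma JstdZ a v : Jstd (a *: v) = a *: Jstd v.
Proof. by rewrite /Jstd scale_row_mx !linearZ /= scalerN. Qed.

Lemma JstdB u v : Jstd (u - v) = Jstd u - Jstd v.
Proof. by rewrite JstdD -scaleN1r JstdZ scaleN1r. Qed.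

Lemma edot_lrsubmx u v : edot u v =
  \sum_(i < d) u 0 (lshift d i) * v 0 (lshift d i) +
  \sum_(i < d) u 0 (rshift d i) * v 0 (rshift d i).
Proof. by rewrite /edot big_split_ord. Qed.

Lemma edotJ u v : edot (Jstd u) (Jstd v) = edot u v.
Proof.
rewrite !edot_lrsubmx /Jstd addrC; congr (_ + _); apply: eq_bigr => i _;
by rewrite ?row_mxEl ?row_mxEr !mxE ?mulrNN.
Qed.

Lemma edotJ_self u : edot u (Jstd u) = 0.
Proof.
rewrite edot_lrsubmx /Jstd -big_split big1 // => i _.
by rewrite row_mxEl row_mxEr !mxE mulrN /= [u 0 (rshift d i) * _]mulrC addNr.
Qed.

Lemma enormJ u : enorm (Jstd u) = enorm u.
Proof. by rewrite /enorm edotJ. Qed.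

Lemma unit_dist_le (x y : vec) : x != 0 -> y != 0 ->
  enorm ((enorm x)^-1 *: x - (enorm y)^-1 *: y) <= 2 * enorm (x - y) / enorm x.
Proof.
move=> x0 y0; set a := enorm x; set b := enorm y; set e := enorm (x - y).
have a0 : 0 < a by exact: enorm_gt0.
have b0 : 0 < b by exact: enorm_gt0.
have -> : a^-1 *: x - b^-1 *: y = a^-1 *: (x - y) + ((b - a) / (a * b)) *: y.
  by apply/rowP => i; rewrite !mxE; field; rewrite !gt_eqF.
apply: le_trans (ler_enormD _ _) _.
have coef : `|(b - a) / (a * b)| * b = `|b - a| / a.
  by rewrite normrM normfV (gtr0_norm (mulr_gt0 a0 b0)); field; rewrite !gt_eqF.
rewrite !enormZ -/b -/e coef gtr0_norm ?invr_gt0 //.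
have : `|b - a| <= e.
  have : a - b <= e := lerB_enorm_dist x y.
  have : b - a <= e by rewrite /e enorm_distC; exact: lerB_enorm_dist.
  by rewrite ler_norml; lra.
have ia0 : 0 <= a^-1 by rewrite invr_ge0 ltW.
move=> /(ler_wpM2r ia0).
have -> : 2 * e / a = e / a + e / a by field; rewrite gt_eqF.
by rewrite [a^-1 * e]mulrC; lra.
Qed.

Lemma enorm_unitJ (x : vec) : x != 0 -> enorm ((enorm x)^-1 *: Jstd x) = 1.
Proof.
move=> x0; rewrite enormZ enormJ ger0_norm ?invr_ge0 ?enorm_ge0 // mulVf //.
by rewrite enorm_eq0.
Qed.

End Euclidean.

Lemma enorm_lrsubmx_sqr (R : realType) (d : nat) (z : 'rV[R]_((d + d) + (d + d))) :
  enorm z ^+ 2 = enorm (lsubmx z) ^+ 2 + enorm (rsubmx z) ^+ 2.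
Proof.
by rewrite !enorm_sqr edot_lrsubmx; congr (_ + _); apply: eq_bigr => i _; rewrite !mxE.
Qed.

Lemma compact_continuous_ub (R : realType) (T : topologicalType) (A : set T) (f : T -> R) :
  compact A -> {within A, continuous f} -> exists2 B, 0 < B & forall x, A x -> f x <= B.
Proof.
move=> A_compact f_cont; have [[x0 Ax0]|A0] := pselect (A !=set0); last first.
  by exists 1 => // x Ax; exfalso; apply: A0; exists x.
have [x1 _ f_max] := compact_EVT_max (ex_intro _ x0 Ax0) A_compact f_cont.
exists (`|f x1| + 1) => [|x Ax]; first by rewrite ltr_wpDl.
by apply: le_trans (f_max x (mem_set Ax)) _; rewrite ler_wpDr // ler_norm.
Qed.

Section RealDerivative.
Variables (R : realType) (h h1 : R -> R).
Hypothesis dh : forall t : R, is_derive t 1 h (h1 t).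

Lemma is_derive_continuous : continuous h.
Proof. by move=> t; apply/differentiable_continuous/derivable1_diffP; case: (dh t). Qed.

Lemma MVT_everywhere a b : a <= b ->
  exists2 c, c \in `[a, b] & h b - h a = h1 c * (b - a).
Proof.
move=> ab; apply: (MVT_segment ab (fun t _ => dh t)).
exact/continuous_subspaceT/is_derive_continuous.
Qed.

Lemma deriv_lb_increment mu a b : a <= b ->
  (forall t, a <= t <= b -> mu <= h1 t) -> h a + mu * (b - a) <= h b.
Proof.
move=> ab h1_ge; have [c /[!in_itv] /= /andP[ac cb] hab] := MVT_everywhere ab.
have : mu * (b - a) <= h1 c * (b - a).
  by rewrite ler_wpM2r ?subr_ge0 // h1_ge // ac cb.
lra.
Qed.

Lemma deriv_nondecreasing_reaches c s1 :
  h 0 < c -> 0 <= s1 -> 0 < h1 s1 ->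
  (forall s t, s1 <= s <= t -> h1 s <= h1 t) -> exists s, h s = c.
Proof.
move=> h0c s10 h1s1 h1_mono.
(* beyond [s1], [h] grows at least with slope [h1 s1] *)
set s := s1 + `|c - h s1| / h1 s1.
have s1s : s1 <= s by rewrite lerDl divr_ge0 // ltW.
have cs : c <= h s.
  have slope_ge t : s1 <= t <= s -> h1 s1 <= h1 t.
    by move=> /andP[s1t _]; apply: h1_mono; rewrite lexx.
  have := deriv_lb_increment s1s slope_ge.
  rewrite /s addrAC subrr add0r mulrCA divff ?gt_eqF // mulr1.
  have := ler_norm (c - h s1); lra.
have s0 : 0 <= s by exact: le_trans s1s.
have between : Num.min (h 0) (h s) <= c <= Num.max (h 0) (h s).
  by rewrite ge_min le_max (ltW h0c) cs orbT.
have [t _ ht] := IVT s0 (continuous_subspaceT is_derive_continuous) between.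
by exists t.
Qed.

Lemma deriv_neg_decreases : {for 0, continuous h1} -> h1 0 < 0 ->
  exists2 t, 0 < t & h t < h 0.
Proof.
move=> h1_cont h10.
have e0 : 0 < - h1 0 by rewrite oppr_gt0.
have [del /= del0 near0] := (nbhs_ballP _ _).1 (cvgr_dist_lt _ _ h1_cont _ e0).
have h1_neg t : 0 <= t < del -> h1 t < 0.
  move=> /andP[t0 tdel].
  have /near0 /= : ball (0 : R) del t by rewrite -ball_normE /ball_ /= sub0r normrN ger0_norm.
  rewrite ltr_norml => /andP[+ _]; lra.
have del20 : 0 <= del / 2 by lra.
exists (del / 2); first lra.
have [c /[!in_itv] /= /andP[c0 cdel] incr] := MVT_everywhere del20.
have : h1 c < 0 by apply: h1_neg; rewrite c0 /=; lra.
nra.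
Qed.

End RealDerivative.

Lemma second_deriv_lb_taylor (R : realType) (h h1 h2 : R -> R) mu :
  (forall t : R, is_derive t 1 h (h1 t)) -> (forall t : R, is_derive t 1 h1 (h2 t)) ->
  0 <= mu -> (forall t, 0 <= t <= 1 -> mu <= h2 t) -> h 0 + h1 0 + mu / 4 <= h 1.
Proof.
move=> dh dh1 mu0 h2_ge.
have h1_ge t : 0 <= t <= 1 -> h1 0 + mu * t <= h1 t.
  move=> /andP[t0 t1]; rewrite -[X in mu * X]subr0.
  apply: (deriv_lb_increment dh1) => // s /andP[s0 st].
  by apply: h2_ge; rewrite s0 /=; lra.
have left : h 0 + h1 0 * (1 / 2 - 0) <= h (1 / 2).
  apply: (deriv_lb_increment dh); first lra.
  move=> t /andP[t0 t1]; have t01 : 0 <= t <= 1 by rewrite t0 /=; lra.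
  have := h1_ge t t01; have : 0 <= mu * t by exact: mulr_ge0.
  lra.
have right : h (1 / 2) + (h1 0 + mu / 2) * (1 - 1 / 2) <= h 1.
  apply: (deriv_lb_increment dh); first lra.
  move=> t /andP[t0 t1]; have t01 : 0 <= t <= 1 by rewrite t1 andbT; lra.
  have := h1_ge t t01; have : mu / 2 <= mu * t by rewrite ler_wpM2l //; lra.
  lra.
lra.
Qed.

Section Curves.
Variables (R : realType) (d : nat).
Notation vec := 'rV[R]_(d + d).

Lemma is_derive_coord m n (g : R -> 'M[R]_(m, n)) (D : 'M[R]_(m, n)) (t : R) i j :
  is_derive t 1 g D -> is_derive t 1 (fun s => g s i j) (D i j).
Proof.
move=> [dg gD]; apply: DeriveDef; first exact: (derivable_mxP g t 1).1 dg i j.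
by rewrite -gD derive_mx // mxE.
Qed.

Lemma edot_is_derive (g : R -> vec) (D w : vec) (t : R) :
  is_derive t 1 g D -> is_derive t 1 (fun s => edot w (g s)) (edot w D).
Proof.
move=> dg; have := is_derive_sum (fun j => is_deriveZ (w 0 j) (is_derive_coord 0 j dg)).
by rewrite -fct_sumE.
Qed.

Lemma mean_value_ineq (g g' : R -> vec) v K a b : a <= b ->
  (forall t : R, is_derive t 1 g (g' t)) -> (forall t, a <= t <= b -> enorm (g' t - v) <= K) ->
  enorm (g b - g a - (b - a) *: v) <= K * (b - a).
Proof.
move=> ab dg g'_near.
set w := g b - g a - (b - a) *: v.
have [c /[!in_itv] /= cab incr] := MVT_everywhere (fun t => edot_is_derive w (dg t)) ab.
have ww : edot w w = edot w (g' c - v) * (b - a).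
  by rewrite {2}/w !edotBr edotZr incr; ring.
have K_ge : enorm (g' c - v) <= K by exact: g'_near.
have w_sqr : enorm w ^+ 2 <= enorm w * (K * (b - a)).
  rewrite enorm_sqr ww mulrA ler_wpM2r ?subr_ge0 //.
  by apply: le_trans (edot_le_enormM _ _) _; rewrite ler_wpM2l ?enorm_ge0.
have : 0 <= K * (b - a) by rewrite mulr_ge0 ?subr_ge0 // (le_trans (enorm_ge0 _) K_ge).
have := enorm_ge0 w; nra.
Qed.

Lemma flow_time_one_le (Vf : vec -> vec) (phi : R -> vec -> vec) B K x :
  is_flow Vf phi -> x != 0 -> 0 <= K ->
  (forall y, y != 0 -> enorm (Vf y) <= B) ->
  (forall y, y != 0 -> enorm (Vf y - Vf x) <= K * enorm (x - y) / enorm x) ->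
  enorm (phi 1 x - x - Vf x) <= K * B / enorm x.
Proof.
move=> flow x0 K0 Vf_bd Vf_lip; have [phi0 phi_t] := flow x x0.
have dphi t := (phi_t t).2.
have B0 : 0 <= B := le_trans (enorm_ge0 _) (Vf_bd x x0).
have orbit_near s : 0 <= s <= 1 -> enorm (phi s x - x) <= B.
  move=> /andP[s0 s1].
  have Vf_near t : 0 <= t <= s -> enorm (Vf (phi t x) - 0) <= B.
    by rewrite subr0 => _; exact: Vf_bd (phi_t t).1.
  have := mean_value_ineq s0 dphi Vf_near.
  rewrite phi0 scaler0 !subr0 => orbit_s; apply: le_trans orbit_s _.
  exact: ler_piMr.
have := mean_value_ineq (v := Vf x) (K := K * B / enorm x) ler01 dphi.
rewrite phi0 subr0 scale1r mulr1; apply=> t /orbit_near near_t.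
apply: le_trans (Vf_lip _ (phi_t t).1) _.
by rewrite enorm_distC ler_wpM2r ?invr_ge0 ?enorm_ge0 // ler_wpM2l.
Qed.

End Curves.

Section DirectionalDerivative.
Variables (R : realType) (d : nat).
Notation vec := 'rV[R]_(d + d).

Lemma derive_partialsE (f : vec -> R) x w : differentiable f x ->
  'D_w f x = \sum_i w 0 i * 'D_(ebasis R i) f x.
Proof.
move=> df; rewrite deriveE // {1}(row_sum_delta w) linear_sum.
by apply: eq_bigr => i _; rewrite linearZ /= -deriveE.
Qed.

Lemma line_is_derive (f : vec -> R) (p w : vec) (s : R) :
  differentiable f (p + s *: w) ->
  is_derive s 1 (fun t => f (p + t *: w)) ('D_w f (p + s *: w)).
Proof.
move=> df; set g := fun t => f (p + t *: w).
have quotE : (fun h : R => h^-1 *: ((g \o shift s) (h *: 1) - g s)) =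
    (fun h : R => h^-1 *: ((f \o shift (p + s *: w)) (h *: w) - f (p + s *: w))).
  by apply/funext => h; rewrite /g /= /shift [h *: 1]mulr1 scalerDl addrCA addrC.
have dg : derivable g s 1 by rewrite /derivable quotE; exact: diff_derivable.
by apply: DeriveDef => //; rewrite /derive quotE.
Qed.

End DirectionalDerivative.

Section SmoothFunction.
Variables (R : realType) (d : nat) (F : 'rV[R]_(d + d) -> R).
Hypothesis F_smooth : smooth F.
Notation vec := 'rV[R]_(d + d).
Notation vec2 := 'rV[R]_((d + d) + (d + d)).

Definition hess_form (x w : vec) : R := (w *m hessian F x *m w^T) 0 0.

Lemma smooth_differentiable x : differentiable F x.
Proof. exact: (F_smooth [::] x). Qed.

Lemma smooth_partial_differentiable j x : differentiable ('D_(ebasis R j) F) x.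
Proof. exact: (F_smooth [:: ebasis R j] x). Qed.

Lemma smooth_partial2_differentiable i j x :
  differentiable ('D_(ebasis R i) ('D_(ebasis R j) F)) x.
Proof. exact: (F_smooth [:: ebasis R i; ebasis R j] x). Qed.

Lemma derive_grad x w : 'D_w F x = edot (grad F x) w.
Proof.
rewrite derive_partialsE; last exact: smooth_differentiable.
by apply: eq_bigr => i _; rewrite mxE mulrC.
Qed.

Lemma deriveE_sum w : 'D_w F = \sum_j w 0 j *: 'D_(ebasis R j) F.
Proof.
by apply/funext => y; rewrite fct_sumE derive_partialsE //; exact: smooth_differentiable.
Qed.

Lemma derive_differentiable w x : differentiable ('D_w F) x.
Proof.
rewrite deriveE_sum; apply: differentiable_sum => j.
exact/differentiableZ/smooth_partial_differentiable.
Qed.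

Lemma hess_formE x w : hess_form x w =
  \sum_j w 0 j * \sum_i w 0 i * 'D_(ebasis R i) ('D_(ebasis R j) F) x.
Proof.
rewrite /hess_form !mxE; apply: eq_bigr => j _; rewrite !mxE mulrC; congr (_ * _).
by apply: eq_bigr => i _; rewrite !mxE.
Qed.

Lemma derive2_hess_form x w : 'D_w ('D_w F) x = hess_form x w.
Proof.
rewrite hess_formE deriveE_sum derive_sum; last first.
  by move=> j; apply/diff_derivable/differentiableZ/smooth_partial_differentiable.
apply: eq_bigr => j _; rewrite deriveZ; last exact/diff_derivable/smooth_partial_differentiable.
by rewrite derive_partialsE //; exact: smooth_partial_differentiable.
Qed.

Lemma hess_formZ x w k : hess_form x (k *: w) = k ^+ 2 * hess_form x w.
Proof.
by rewrite /hess_form [(k *: w)^T]linearZ /= -scalemxAr -!scalemxAl !mxE mulrA expr2.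
Qed.

Lemma line_is_derive1 p v (t : R) :
  is_derive t 1 (fun s => F (p + s *: v)) ('D_v F (p + t *: v)).
Proof. exact/line_is_derive/smooth_differentiable. Qed.

Lemma line_is_derive2 p v (t : R) :
  is_derive t 1 (fun s => 'D_v F (p + s *: v)) (hess_form (p + t *: v) v).
Proof.
by apply: is_derive_eq (line_is_derive (derive_differentiable _ _)) _; exact: derive2_hess_form.
Qed.

Lemma grad_differentiable x : differentiable (grad F) x.
Proof.
have -> : grad F = \sum_i (fun y => 'D_(ebasis R i) F y *: ebasis R i).
  apply/funext => y; rewrite fct_sumE {1}[grad F y]row_sum_delta.
  by apply: eq_bigr => i _; rewrite mxE.
apply: differentiable_sum => i; exact/differentiableZl/smooth_partial_differentiable.
Qed.

Lemma hess_form_lsubmx_rsubmx_differentiable (z : vec2) :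
  differentiable (fun z : vec2 => hess_form (lsubmx z) (rsubmx z)) z.
Proof.
have coord_diff k : differentiable (fun z : vec2 => rsubmx z 0 k) z.
  exact: (differentiable_comp (differentiable_rsubmx _) (differentiable_coord _ _ _)).
pose r k := fun z : vec2 => rsubmx z 0 k.
pose H i j := 'D_(ebasis R i) ('D_(ebasis R j) F) \o @lsubmx R 1 (d + d) (d + d).
have -> : (fun z : vec2 => hess_form (lsubmx z) (rsubmx z)) =
    \sum_j (r j * \sum_i (r i * H i j)).
  apply/funext => y; rewrite hess_formE fct_sumE; apply: eq_bigr => j _.
  by rewrite /= fct_sumE.
apply: (@differentiable_sum _ _ _ _ (fun j => r j * \sum_i (r i * H i j))) => j.
apply: differentiableM; first exact: coord_diff.
apply: (@differentiable_sum _ _ _ _ (fun i => r i * H i j)) => i.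
apply: differentiableM; first exact: coord_diff.
apply: differentiable_comp; first exact: differentiable_lsubmx.
exact: smooth_partial2_differentiable.
Qed.

Lemma line_taylor p v mu : 0 <= mu ->
  (forall t, 0 <= t <= 1 -> mu <= hess_form (p + t *: v) v) ->
  F p + 'D_v F p + mu / 4 <= F (p + v).
Proof.
move=> mu0 hess_ge.
have := second_deriv_lb_taylor (line_is_derive1 p v) (line_is_derive2 p v) mu0 hess_ge.
by rewrite !scale0r !addr0 scale1r.
Qed.

Lemma descent_direction p w : 'D_w F p < 0 -> exists2 t, 0 < t & F (p + t *: w) < F p.
Proof.
move=> slope0.
have slope_cont : {for 0, continuous (fun s : R => 'D_w F (p + s *: w))}.
  by have := is_derive_continuous (line_is_derive2 p w); apply.
have := deriv_neg_decreases (line_is_derive1 p w) slope_cont.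
by rewrite !scale0r !addr0; apply.
Qed.

Section StrictlyConvex.
Hypothesis F_hess : forall x, posdef (hessian F x).

Lemma hess_form_gt0 x v : v != 0 -> 0 < hess_form x v.
Proof. exact: F_hess. Qed.

Lemma hess_form_ge0 x v : 0 <= hess_form x v.
Proof.
have [->|v0] := eqVneq v 0; last exact/ltW/hess_form_gt0.
by rewrite /hess_form !mul0mx mxE.
Qed.

Lemma line_derive_nondecreasing p v (s t : R) : s <= t ->
  'D_v F (p + s *: v) <= 'D_v F (p + t *: v).
Proof.
move=> st; have := deriv_lb_increment (line_is_derive2 p v) st (mu := 0).
by rewrite mul0r addr0; apply=> r _; exact: hess_form_ge0.
Qed.

Lemma convex_tangent_le p q : F p + 'D_(q - p) F p <= F q.
Proof.
have := line_taylor (p := p) (v := q - p) (lexx 0) (fun t _ => hess_form_ge0 _ _).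
by rewrite mul0r addr0 [p + _]addrC subrK.
Qed.

Lemma line_hits_levelset c q z : F q < c -> z != 0 -> exists s, F (q + s *: z) = c.
Proof.
move=> Fq z0.
have reaches (v : 'rV[R]_(d + d)) s1 : 0 <= s1 -> 0 < 'D_v F (q + s1 *: v) ->
    exists s, F (q + s *: v) = c.
  move=> s10 slope_pos.
  apply: (deriv_nondecreasing_reaches (line_is_derive1 q v) _ s10 slope_pos).
    by rewrite scale0r addr0.
  by move=> s s' /andP[_ ss']; exact: line_derive_nondecreasing.
(* the slope is strictly increasing, so it is positive at [1] or negative at [0] *)
have [t _ slope_incr] := MVT_everywhere (line_is_derive2 q z) ler01.
have hess_pos := hess_form_gt0 (q + t *: z) z0.
have [slope1|slope1] := ltrP 0 ('D_z F (q + 1 *: z)).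
  exact: reaches ler01 slope1.
have [|s Fs] := reaches (- z) 0 (lexx 0).
  rewrite scale0r addr0 derive_grad edotNr -derive_grad oppr_gt0.
  by move: slope_incr; rewrite subr0 mulr1 scale0r addr0; lra.
by exists (- s); rewrite scaleNr -scalerN.
Qed.

Lemma edot_grad_levelset_ge c p : F p = c -> c - F 0 <= edot (grad F p) p.
Proof.
move=> Fp; have := convex_tangent_le p 0.
by rewrite sub0r derive_grad edotNr Fp; lra.
Qed.

Lemma hess_form_unit_lb rho : exists2 m, 0 < m &
  forall x v : vec, enorm x <= rho -> enorm v = 1 -> m <= hess_form x v.
Proof.
set K := [set z : vec2 | enorm (lsubmx z) <= rho /\ enorm (rsubmx z) = 1].
have [[z0 Kz0]|K0] := pselect (K !=set0); last first.
  exists 1 => // x v xrho v1; exfalso; apply: K0; exists (row_mx x v).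
  by rewrite /K /= row_mxKl row_mxKr.
have lsubmx_cont : continuous (fun z : vec2 => enorm (lsubmx z)).
  move=> z; apply: continuous_comp; last exact: enorm_continuous.
  exact/differentiable_continuous/differentiable_lsubmx.
have rsubmx_cont : continuous (fun z : vec2 => enorm (rsubmx z)).
  move=> z; apply: continuous_comp; last exact: enorm_continuous.
  exact/differentiable_continuous/differentiable_rsubmx.
have K_closed : closed K.
  apply: closedI.
    exact: (proj1 (continuous_closedP _) lsubmx_cont _ (@closed_le _ rho)).
  exact: (proj1 (continuous_closedP _) rsubmx_cont _ (@closed_eq _ 1)).
have rho0 : 0 <= rho by case: Kz0 => /= + _; apply: le_trans; exact: enorm_ge0.
have K_sub : K `<=` [set z | enorm z <= rho + 1].
  move=> z [/= zl zr]; rewrite -ler_sqr ?nnegrE ?enorm_ge0 ?addr_ge0 //.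
  rewrite enorm_lrsubmx_sqr zr.
  have : enorm (lsubmx z) ^+ 2 <= rho ^+ 2 by rewrite ler_sqr ?nnegrE ?enorm_ge0.
  nra.
have K_compact := subclosed_compact K_closed (@enorm_le_compact R (d + d) (rho + 1)) K_sub.
have [z1 /set_mem [_ z1r] z1_min] := EVT_min_rV (ex_intro _ z0 Kz0) K_compact
  (continuous_subspaceT (fun z => differentiable_continuous
    (hess_form_lsubmx_rsubmx_differentiable z))).
exists (hess_form (lsubmx z1) (rsubmx z1)).
  by apply: hess_form_gt0; rewrite -enorm_eq0 z1r oner_neq0.
move=> x v xrho v1; have := z1_min (row_mx x v); rewrite row_mxKl row_mxKr; apply.
by rewrite inE /K /= row_mxKl row_mxKr.
Qed.

End StrictlyConvex.

End SmoothFunction.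

Section LevelSet.
Variables (R : realType) (d : nat) (F : 'rV[R]_(d + d) -> R) (c : R).
Hypothesis F_smooth : smooth F.
Hypothesis F_hess : forall x, posdef (hessian F x).
Hypothesis M_compact : compact (levelset F c).
Hypothesis origin_inside : F 0 < c.
Notation vec := 'rV[R]_(d + d).

Lemma grad_levelset_neq0 p : F p = c -> grad F p != 0.
Proof.
move=> Fp; apply/eqP => g0; have := edot_grad_levelset_ge F_smooth F_hess Fp.
by rewrite g0 edot0l subr_le0 leNgt origin_inside.
Qed.

Lemma argmax_edot_normal u p : u != 0 -> F p = c ->
  (forall q, F q = c -> edot u q <= edot u p) ->
  forall w, edot (grad F p) w < 0 -> edot u w <= 0.
Proof.
move=> u0 Fp p_max w; rewrite -derive_grad // => /(descent_direction F_smooth) [t t0].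
have Ju0 : Jstd u != 0 by rewrite -enorm_eq0 enormJ enorm_eq0.
(* moving along [Jstd u], which is orthogonal to [u], the level set is reached again *)
rewrite Fp => /(line_hits_levelset F_smooth F_hess)/(_ Ju0) [s /p_max].
rewrite !edotDr !edotZr edotJ_self mulr0 addr0.
by rewrite gerDl pmulr_rle0.
Qed.

Lemma gauss_surjective u : enorm u = 1 -> exists p, F p = c /\ gauss F p = u.
Proof.
move=> u1; have u0 : u != 0 by rewrite -enorm_eq0 u1 oner_neq0.
have [s Fs] := line_hits_levelset F_smooth F_hess origin_inside u0.
have [p /[!inE] Fp p_max] := EVT_max_rV (ex_intro _ _ Fs) M_compact
  (continuous_subspaceT (@edot_continuous _ _ u)).
have [a a0 ua] := colinear_of_halfspace_le (grad_levelset_neq0 Fp)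
  (argmax_edot_normal u0 Fp (fun q Fq => p_max q (mem_set Fq))).
exists p; split => //.
have : a * enorm (grad F p) = 1 by rewrite -u1 ua enormZ ger0_norm.
by rewrite /gauss ua => /(canRL (mulfK _)) ->; rewrite ?mul1r // enorm_eq0 grad_levelset_neq0.
Qed.

Lemma gauss_invK u : enorm u = 1 ->
  F (gauss_inv F c u) = c /\ gauss F (gauss_inv F c u) = u.
Proof. by move=> u1; exact: (xgetPex 0 (gauss_surjective u1)). Qed.

Lemma levelset_grad_ub : exists2 L, 0 < L & forall p, F p = c -> enorm (grad F p) <= L.
Proof.
have grad_cont : continuous (fun x : vec => enorm (grad F x)).
  move=> x; apply: continuous_comp; last exact: enorm_continuous.
  exact/differentiable_continuous/grad_differentiable.
have [L L0 ub] := compact_continuous_ub M_compact (continuous_subspaceT grad_cont).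
by exists L.
Qed.

Lemma levelset_enorm_ub : exists2 rho, 0 < rho & forall p, F p = c -> enorm p <= rho.
Proof.
have enorm_cont : {within levelset F c, continuous (@enorm R d)}.
  exact: continuous_subspaceT (@enorm_continuous R d).
have [rho rho0 ub] := compact_continuous_ub M_compact enorm_cont.
by exists rho.
Qed.

Lemma levelset_chord_strongly_convex : exists2 m, 0 < m & forall p q, F p = c -> F q = c ->
  edot (grad F p) (q - p) <= - (m * enorm (q - p) ^+ 2) / 4.
Proof.
have [rho _ Mrho] := levelset_enorm_ub.
have [m m0 hess_lb] := hess_form_unit_lb F_smooth F_hess rho.
exists m => // p q Fp Fq.
set v := q - p.
have hess_chord t : 0 <= t <= 1 -> m * enorm v ^+ 2 <= hess_form F (p + t *: v) v.
  move=> /andP[t0 t1].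
  have [->|v0] := eqVneq v 0; first by rewrite enorm0 expr0n mulr0 hess_form_ge0.
  have pt_rho : enorm (p + t *: v) <= rho.
    have -> : p + t *: v = (1 - t) *: p + t *: q.
      by apply/rowP => i; rewrite /v !mxE; ring.
    apply: le_trans (ler_enormD _ _) _; rewrite !enormZ !ger0_norm ?subr_ge0 //.
    have := Mrho p Fp; have := Mrho q Fq; nra.
  have v_pos := enorm_gt0 v0.
  have unit_v : enorm ((enorm v)^-1 *: v) = 1.
    by rewrite enormZ ger0_norm ?invr_ge0 ?ltW // mulVf ?gt_eqF.
  have := hess_lb _ _ pt_rho unit_v; rewrite hess_formZ exprVn.
  move=> /(ler_wpM2l (ltW (exprn_gt0 2 v_pos))).
  by rewrite mulrA mulfV ?gt_eqF ?exprn_gt0 // mul1r [_ * m]mulrC.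
have := line_taylor F_smooth (mulr_ge0 (ltW m0) (sqr_ge0 (enorm v))) hess_chord.
by rewrite derive_grad // /v [p + _]addrC subrK Fp Fq; lra.
Qed.

Lemma gauss_inv_lipschitz : exists2 kappa, 0 < kappa & forall p q, F p = c -> F q = c ->
  kappa * enorm (p - q) <= enorm (gauss F p - gauss F q).
Proof.
have [L L0 gradL] := levelset_grad_ub.
have [m m0 chord] := levelset_chord_strongly_convex.
have gauss_slope a b : F a = c -> F b = c ->
    m * enorm (a - b) ^+ 2 / (4 * L) <= edot (gauss F a) (a - b).
  move=> Fa Fb; have chord_ab := chord a b Fa Fb.
  rewrite [enorm (b - a)]enorm_distC in chord_ab.
  rewrite /gauss edotZl -[X in edot _ X]opprB edotNr.
  set g := grad F a in chord_ab *; set mu := m * enorm (a - b) ^+ 2 in chord_ab *.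
  have g0 : 0 < enorm g := enorm_gt0 (grad_levelset_neq0 Fa).
  have mu0 : 0 <= mu by rewrite mulr_ge0 ?sqr_ge0 ?ltW.
  apply: (@le_trans _ _ ((enorm g)^-1 * (mu / 4))).
    rewrite invfM mulrA mulrC; apply: ler_wpM2r; first by rewrite divr_ge0.
    by rewrite lef_pV2 ?posrE // gradL.
  by apply: ler_wpM2l; [rewrite invr_ge0 ltW | lra].
exists (m / (4 * L)) => [|p q Fp Fq]; first by rewrite divr_gt0 // mulr_gt0.
set e := enorm (p - q).
have [->|e0] := eqVneq e 0; first by rewrite mulr0 enorm_ge0.
have {}e0 : 0 < e by rewrite lt_def e0 enorm_ge0.
have sp := gauss_slope p q Fp Fq; have sq := gauss_slope q p Fq Fp.
rewrite enorm_distC -[q - p]opprB edotNr -/e in sq; rewrite -/e in sp.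
have := edot_le_enormM (gauss F p - gauss F q) (p - q).
rewrite edotBl -/e -(ler_pM2r e0).
have : 0 <= m * e ^+ 2 / (4 * L) by rewrite !mulr_ge0 ?invr_ge0 ?mulr_ge0 ?sqr_ge0 ?ltW.
have -> : m / (4 * L) * e * e = m * e ^+ 2 / (4 * L) by rewrite expr2; ring.
lra.
Qed.

Lemma Vfield_bounded : exists2 B, 0 < B & forall x, x != 0 -> enorm (Vfield F c x) <= B.
Proof.
have [rho rho0 Mrho] := levelset_enorm_ub.
exists (4 * rho) => [|x x0]; first by rewrite mulr_gt0.
have u1 := enorm_unitJ x0.
have [Fm _] := gauss_invK u1.
have [Fp _] := gauss_invK (etrans (enormN _) u1).
rewrite /Vfield enormZ ger0_norm // /nplus /nminus.
apply: le_trans (ler_wpM2l _ (ler_enormD _ _)) _ => //.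
have := Mrho _ Fm; have := Mrho _ Fp; rewrite enormN; lra.
Qed.

Lemma Vfield_lipschitz : exists2 K, 0 < K & forall x y, x != 0 -> y != 0 ->
  enorm (Vfield F c y - Vfield F c x) <= K * enorm (x - y) / enorm x.
Proof.
have [kappa kappa0 gauss_lip] := gauss_inv_lipschitz.
exists (8 / kappa) => [|x y x0 y0]; first by rewrite divr_gt0.
have inv_lip u v : enorm u = 1 -> enorm v = 1 ->
    kappa * enorm (gauss_inv F c u - gauss_inv F c v) <= enorm (u - v).
  move=> u1 v1; have [Fu Gu] := gauss_invK u1.
  have [Fv Gv] := gauss_invK v1.
  by have := gauss_lip _ _ Fu Fv; rewrite Gu Gv.
set ux := (enorm x)^-1 *: Jstd x; set uy := (enorm y)^-1 *: Jstd y.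
have ux1 : enorm ux = 1 := enorm_unitJ x0.
have uy1 : enorm uy = 1 := enorm_unitJ y0.
have uxy : enorm (uy - ux) <= 2 * enorm (x - y) / enorm x.
  by rewrite [enorm (uy - ux)]enorm_distC /ux /uy -!JstdZ -JstdB enormJ; exact: unit_dist_le.
have lip_plus := inv_lip (- uy) (- ux) (etrans (enormN _) uy1) (etrans (enormN _) ux1).
rewrite (_ : - uy - - ux = - (uy - ux)) ?enormN ?opprD // in lip_plus.
have lip_minus := inv_lip uy ux uy1 ux1.
have -> : Vfield F c y - Vfield F c x =
    2%:R *: ((nplus F c y - nplus F c x) - (nminus F c y - nminus F c x)).
  by apply/rowP => i; rewrite /Vfield !mxE; ring.
rewrite enormZ ger0_norm //.
apply: le_trans (ler_wpM2l _ (ler_enormD _ _)) _ => //; rewrite enormN.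
rewrite /nplus /nminus -/ux -/uy.
set D := 2 * enorm (x - y) / enorm x in uxy.
have -> : 8 / kappa * enorm (x - y) / enorm x = 4 * D / kappa.
  by rewrite /D; field; rewrite enorm_eq0 x0 gt_eqF.
rewrite ler_pdivlMr //; lra.
Qed.

End LevelSet.

Unset Implicit Arguments.

Theorem lemma3p3 (R : realType) (d : nat) (hd : (0 < d)%N)
  (F : 'rV[R]_(d + d) -> R) (c : R)
  (F_smooth : smooth F)
  (F_hess : forall x, posdef (hessian F x))
  (M_compact : compact (levelset F c))
  (origin_inside : F 0 < c)
  (phi : R -> 'rV[R]_(d + d) -> 'rV[R]_(d + d))
  (phi_flow : is_flow (Vfield F c) phi) :
  exists Ct : R, exists deltat : R, 0 < Ct /\ 0 < deltat /\
    forall x : 'rV[R]_(d + d), deltat^-1 <= enorm x ->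
      enorm (phi 1 x - x - Vfield F c x) <= Ct / enorm x.
Proof.
have [B B0 V_bd] := Vfield_bounded F_smooth F_hess M_compact origin_inside.
have [K K0 V_lip] := Vfield_lipschitz F_smooth F_hess M_compact origin_inside.
exists (K * B), 1; split; first exact: mulr_gt0.
split=> // x; rewrite invr1 => x1.
have x0 : x != 0 by rewrite -enorm_eq0 gt_eqF // (lt_le_trans ltr01 x1).
exact: flow_time_one_le phi_flow x0 (ltW K0) V_bd (fun y => V_lip x y x0).
Qed.
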